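(* Let $X$ be a $\mathbb{Q}$-factorial projective toric variety defined over $\overline{\mathbb{Q}}$ and let $f\colon X\to X$ be a surjective toric morphism. Then the set of pre-periodic points of $f$ is Zariski dense in $X$.
   Context: A toric morphism is a morphism of toric varieties induced by a map of lattices compatible with the fans (equivariant with respect to the torus actions). A point $x$ is pre-periodic for $f$ if $f^{n}(x)=f^{m}(x)$ for some $0\le n<m$. *)

(* Toric varieties X_Sigma over Qbar (= algC), built from a
   fan Sigma in N_Q = Q^n, N = M = Z^n (row vectors). *)
From HB Require Import structures.
From mathcomp Require Import all_boot all_order all_algebra all_field.
Set Implicit Arguments. Unset Strict Implicit. Unset Printing Implicit Defensive.
Import Order.TTheory GRing.Theory Num.Theory.
Local Open Scope ring_scope.

Section Toric.
Variable n : nat.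

Definition toQ (v : 'rV[int]_n) : 'rV[rat]_n := map_mx intr v.
Definition pairQ (m u : 'rV[rat]_n) : rat := \sum_i m 0 i * u 0 i.
Definition pairZ (m v : 'rV[int]_n) : int := \sum_i m 0 i * v 0 i.

(* a rational polyhedral cone, given by a finite list of lattice generators *)
Definition cone := seq 'rV[int]_n.

Definition in_cone (s : cone) (u : 'rV[rat]_n) : Prop :=
  exists l : 'I_(size s) -> rat,
    (forall i, 0 <= l i) /\ u = \sum_i l i *: toQ (nth 0 s i).

Definition cone_eq (s t : cone) : Prop := forall u, in_cone s u <-> in_cone t u.
Definition cone_sub (s t : cone) : Prop := forall u, in_cone s u -> in_cone t u.

Definition in_dual (s : cone) (m : 'rV[int]_n) : bool := all (fun g => 0 <= pairZ m g) s.
Definition in_perp (s : cone) (m : 'rV[int]_n) : bool := all (fun g => pairZ m g == 0) s.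

Definition is_face (t s : cone) : Prop :=
  exists m, in_dual s m /\
    forall u, in_cone t u <-> (in_cone s u /\ pairQ (toQ m) u = 0).

Definition strongly_convex (s : cone) : Prop :=
  forall u, in_cone s u -> in_cone s (- u) -> u = 0.

Definition is_fan (k : nat) (F : 'I_k -> cone) : Prop :=
  [/\ forall i, strongly_convex (F i),
      forall i j, cone_eq (F i) (F j) -> i = j,
      forall i t, is_face t (F i) -> exists j, cone_eq (F j) t &
      forall i j, exists l, (forall u, in_cone (F l) u <-> (in_cone (F i) u /\ in_cone (F j) u))
                            /\ is_face (F l) (F i) /\ is_face (F l) (F j)].

Definition complete_fan k (F : 'I_k -> cone) : Prop := forall u, exists i, in_cone (F i) u.

Definition simplicial (s : cone) : Prop :=
  exists t : cone, cone_eq t s /\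
    row_free (\matrix_(i < size t, j < n) (toQ (nth 0 t i)) 0 j).

(* X_Sigma is Q-factorial iff every cone of Sigma is simplicial *)
Definition Qfactorial_fan k (F : 'I_k -> cone) : Prop := forall i, simplicial (F i).

Definition maximal_cone k (F : 'I_k -> cone) (i : 'I_k) : Prop :=
  forall j, cone_sub (F i) (F j) -> i = j.

(* X_Sigma is projective iff Sigma is complete and carries a strictly convex
   support function (CLS Thm 7.2.10): linear functionals m_sigma on maximal
   cones with <m_sigma,u> = min_sigma' <m_sigma',u> exactly on sigma. *)
Definition projective_fan k (F : 'I_k -> cone) : Prop :=
  complete_fan F /\
  exists m : 'I_k -> 'rV[rat]_n,
    forall i j u, maximal_cone F i -> maximal_cone F j -> in_cone (F i) u ->
      pairQ (m i) u <= pairQ (m j) u /\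
      (pairQ (m i) u = pairQ (m j) u -> in_cone (F j) u).

(* Qbar-points of X_Sigma: a point of the orbit O(tau) is a pair (tau, x) with
   x : M -> Qbar supported exactly on tau^perp cap M and restricting to a group
   homomorphism tau^perp cap M -> Qbar^*.  Its coordinates in the chart U_sigma
   (tau a face of sigma) are m |-> x m for m in sigma^vee cap M. *)
Definition tpoint k := ('I_k * ('rV[int]_n -> algC))%type.

Definition is_point k (F : 'I_k -> cone) (p : tpoint k) : Prop :=
  [/\ p.2 0 = 1,
      forall m, (p.2 m != 0) = in_perp (F p.1) m &
      forall m m', in_perp (F p.1) m -> in_perp (F p.1) m' ->
        p.2 (m + m') = p.2 m * p.2 m'].

Definition in_chart k (F : 'I_k -> cone) (i : 'I_k) (p : tpoint k) : Prop :=
  is_face (F p.1) (F i).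

(* regular functions on U_sigma: finite Qbar-combinations of characters chi^m,
   m in sigma^vee cap M *)
Definition laurent := seq (algC * 'rV[int]_n).
Definition eval_l k (g : laurent) (p : tpoint k) : algC := \sum_(c <- g) c.1 * p.2 c.2.

(* Zariski-closed subsets of X_Sigma(Qbar): closed in every affine chart *)
Definition zclosed k (F : 'I_k -> cone) (Z : tpoint k -> Prop) : Prop :=
  forall i, exists G : laurent -> Prop,
    (forall g, G g -> all (fun c => in_dual (F i) c.2) g) /\
    forall p, is_point F p -> in_chart F i p ->
      (Z p <-> forall g, G g -> eval_l g p = 0).

Definition zdense k (F : 'I_k -> cone) (S : tpoint k -> Prop) : Prop :=
  forall Z, zclosed F Z -> (forall p, is_point F p -> S p -> Z p) ->
    forall p, is_point F p -> Z p.

(* toric morphism X_Sigma -> X_Sigma induced by the lattice map N -> N,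
   u |-> u *m phi, compatible with the fan; on points the orbit O(tau) goes to
   O(tau'), tau' the smallest cone containing phi(tau), and characters pull
   back along the dual map m |-> m *m phi^T. *)
Definition phiQ (phi : 'M[int]_n) : 'M[rat]_n := map_mx intr phi.

Definition is_toric_morphism k (F : 'I_k -> cone) (phi : 'M[int]_n)
    (f : tpoint k -> tpoint k) : Prop :=
  (forall i, exists j, forall u, in_cone (F i) u -> in_cone (F j) (u *m phiQ phi)) /\
  forall p, is_point F p ->
    [/\ forall u, in_cone (F p.1) u -> in_cone (F (f p).1) (u *m phiQ phi),
        forall l, (forall u, in_cone (F p.1) u -> in_cone (F l) (u *m phiQ phi)) ->
                  cone_sub (F (f p).1) (F l) &
        forall m, (f p).2 m = if in_perp (F (f p).1) m then p.2 (m *m phi^T) else 0].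

Definition surjective_on k (F : 'I_k -> cone) (f : tpoint k -> tpoint k) : Prop :=
  forall q, is_point F q -> exists p, is_point F p /\ f p = q.

Definition preperiodic k (f : tpoint k -> tpoint k) (p : tpoint k) : Prop :=
  exists a b : nat, (a < b)%N /\ iter a f p = iter b f p.

End Toric.

From mathcomp Require Import all_boot all_order all_algebra all_field.
From mathcomp Require Import ring.
From Stdlib Require Import FunctionalExtensionality.
Set Implicit Arguments. Unset Strict Implicit. Unset Printing Implicit Defensive.
Import Order.TTheory GRing.Theory Num.Theory.
Local Open Scope ring_scope.

(* A toric morphism acts on the torus of each orbit by the monomial map
   z |-> z^phi, which preserves N-torsion; hence the torsion points of every
   orbit are preperiodic, as they range over a finite set.  Distinct characters
   chi^m are already distinguished by torsion points, so (Dedekind--Artin) a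
   Laurent polynomial vanishing at all torsion points of an orbit has zero
   coefficients on that orbit, and the torsion points are Zariski dense. *)

Lemma iter_repeat_of_finite_code (X : Type) (T : finType) (f : X -> X) (x : X)
    (c : nat -> T) :
  (forall a b, c a = c b -> iter a f x = iter b f x) ->
  exists a b : nat, (a < b)%N /\ iter a f x = iter b f x.
Proof.
move=> c_inj; pose c' (a : 'I_#|T|.+1) := c a.
have /injectivePn [a [b neq_ab /c_inj eq_iter]] : ~~ injectiveb c'.
  by apply/injectiveP => /leq_card; rewrite card_ord ltnn.
case: (ltngtP a b) => [lt_ab | lt_ba | /val_inj eq_ab].
- by exists a, b.
- by exists b, a.
- by rewrite eq_ab eqxx in neq_ab.
Qed.

Lemma prim_root_exprz_eq1 (R : unitRingType) (N : nat) (ze : R) (d : int) :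
  N.-primitive_root ze -> ze ^ d = 1 -> (N %| `|d|)%N.
Proof.
move=> ze_prim; rewrite (prim_order_dvd ze_prim).
by case: d => k /eqP //=; rewrite invr_eq1.
Qed.

Lemma expfz_sum (R : fieldType) (x : R) (I : Type) (r : seq I) (e : I -> int) :
  x != 0 -> x ^ (\sum_(i <- r) e i) = \prod_(i <- r) x ^ e i.
Proof.
by move=> x_neq0; apply: (big_morph (exprz x)) => [a b|]; [exact: expfzDr | exact: expr0z].
Qed.

Lemma prodfXz (R : fieldType) (I : Type) (r : seq I) (x : I -> R) (e : int) :
  \prod_(i <- r) x i ^ e = (\prod_(i <- r) x i) ^ e.
Proof.
symmetry; apply: (big_morph (fun a : R => a ^ e)) => [a b|]; [exact: expfzMl | exact: exp1rz].
Qed.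

Section Torus.
Variable n : nat.
Implicit Types (m : 'rV[int]_n) (y z : 'I_n -> algC).

Definition chi m z : algC := \prod_i z i ^ m 0 i.

Definition ntorsion (N : nat) z := forall i, z i ^+ N = 1.
Definition torsion z := exists2 N, (0 < N)%N & ntorsion N z.

Lemma torsion_neq0 z i : torsion z -> z i != 0.
Proof.
case=> [[|N] // _ /(_ i) zN1]; apply: contra_eq_neq zN1 => ->.
by rewrite expr0n eq_sym oner_neq0.
Qed.

Lemma torsion1 : torsion (fun=> 1).
Proof. by exists 1%N => // i; rewrite expr1n. Qed.

Lemma torsionM y z : torsion y -> torsion z -> torsion (fun i => y i * z i).
Proof.
case=> N N_gt0 yN [M M_gt0 zM]; exists (N * M)%N; first by rewrite muln_gt0 N_gt0.
by move=> i; rewrite exprMn {2}mulnC !exprM yN zM !expr1n mulr1.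
Qed.

Lemma chi1 m : chi m (fun=> 1) = 1.
Proof. by rewrite /chi big1 // => i _; rewrite exp1rz. Qed.

Lemma chiMz m y z : chi m (fun i => y i * z i) = chi m y * chi m z.
Proof. by rewrite /chi -big_split; apply: eq_bigr => i _; rewrite expfzMl. Qed.

Lemma chi0 z : chi 0 z = 1.
Proof. by rewrite /chi big1 // => i _; rewrite mxE expr0z. Qed.

Lemma chiD z m m' : torsion z -> chi (m + m') z = chi m z * chi m' z.
Proof.
move=> z_tors; rewrite /chi -big_split; apply: eq_bigr => i _.
by rewrite mxE expfzDr // torsion_neq0.
Qed.

Lemma chi_neq0 z m : torsion z -> chi m z != 0.
Proof. by move=> z_tors; apply/prodf_neq0 => i _; rewrite expfz_neq0 // torsion_neq0. Qed.

(* The witness is a primitive (|d|+1)-th root of unity in a coordinate where the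
   exponents differ by d. *)
Lemma chi_separates m1 m0 : m1 != m0 -> exists2 y, torsion y & chi m1 y != chi m0 y.
Proof.
move=> neq_m.
have [i neq_i] : exists i, m1 0 i != m0 0 i.
  apply/existsP; apply: contraR neq_m => /existsPn eq_m.
  by apply/eqP/rowP => j; apply/eqP/negPn.
set d := m1 0 i - m0 0 i.
have [ze ze_prim] := C_prim_root_exists (ltn0Sn `|d|).
have ze_neq0 : ze != 0.
  by apply: contra_eq_neq (prim_expr_order ze_prim) => ->; rewrite expr0n eq_sym oner_neq0.
pose y j := if j == i then ze else 1.
have chi_y m : chi m y = ze ^ m 0 i.
  rewrite /chi (bigD1 i) //= big1 ?mulr1 /y ?eqxx // => j /negbTE ->.
  by rewrite exp1rz.
exists y.
  exists `|d|.+1 => // j; rewrite /y; case: ifP => _; last exact: expr1n.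
  exact: prim_expr_order.
rewrite !chi_y; apply/eqP => eq_pow.
have ze_d : ze ^ d = 1 by rewrite expfzDr // eq_pow -expfzDr // subrr.
have d_gt0 : (0 < `|d|)%N by rewrite absz_gt0 subr_eq0.
by have := prim_root_exprz_eq1 ze_prim ze_d; rewrite gtnNdvd.
Qed.

Lemma chi_independent (s : seq 'rV[int]_n) (a : 'rV[int]_n -> algC) :
  uniq s -> (forall z, torsion z -> \sum_(m <- s) a m * chi m z = 0) ->
  forall m, m \in s -> a m = 0.
Proof.
elim: s a => [//|m0 s IHs] a /= /andP [m0_notin s_uniq] sum0.
have a_s : forall m, m \in s -> a m = 0.
  move=> m m_in; have [|y y_tors neq_chi] := chi_separates (m1 := m) (m0 := m0).
    by apply: contraNneq m0_notin => <-.
  pose b m := a m * (chi m y - chi m0 y).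
  suff /eqP : b m = 0 by rewrite mulf_eq0 subr_eq0 (negbTE neq_chi) orbF => /eqP.
  apply: (IHs b) => // z z_tors.
  have := sum0 _ z_tors; have := sum0 _ (torsionM y_tors z_tors).
  rewrite !big_cons chiMz; under eq_bigr do rewrite chiMz.
  set Syz := \sum_(m <- s) _; set Sz := \sum_(m <- s) _ => sum_yz sum_z.
  (* Dedekind's trick: the m0-terms cancel in sum_yz - chi m0 y * sum_z. *)
  have -> : \sum_(m <- s) b m * chi m z = Syz - chi m0 y * Sz.
    by rewrite mulr_sumr -sumrB; apply: eq_bigr => m' _; rewrite /b; ring.
  transitivity ((a m0 * (chi m0 y * chi m0 z) + Syz) - chi m0 y * (a m0 * chi m0 z + Sz)).
    by ring.
  by rewrite sum_yz sum_z mulr0 subr0.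
move=> m; rewrite inE => /predU1P [-> | ]; last exact: a_s.
have := sum0 _ torsion1; rewrite big_cons chi1 mulr1 big_seq big1 ?addr0 //.
by move=> m' /a_s ->; rewrite mul0r.
Qed.

Definition laurent_coef (g : laurent n) m : algC := \sum_(c <- g | c.2 == m) c.1.

Lemma sum_laurent_coef (g : laurent n) (w : 'rV[int]_n -> algC) :
  \sum_(c <- g) c.1 * w c.2 = \sum_(m <- undup (unzip2 g)) laurent_coef g m * w m.
Proof.
under [RHS]eq_bigr => m _ do rewrite /laurent_coef mulr_suml big_mkcond.
rewrite exchange_big /=; apply: eq_big_seq => c c_in.
rewrite -big_mkcond /= -big_filter.
have -> : [seq m <- undup (unzip2 g) | c.2 == m] = [:: c.2].
  rewrite -(filter_pred1_uniq (undup_uniq (unzip2 g))) ?mem_undup ?map_f //.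
  by apply: eq_filter => m; rewrite /= eq_sym.
by rewrite big_seq1.
Qed.

Definition torus_map (phi : 'M[int]_n) z : 'I_n -> algC := fun j => \prod_i z i ^ phi i j.

Lemma ntorsion_torus_map phi N z : ntorsion N z -> ntorsion N (torus_map phi z).
Proof.
move=> zN j; rewrite /torus_map -prodrXl big1 // => i _.
have -> : (z i ^ phi i j) ^+ N = (z i ^+ N) ^ phi i j by exact: (exprzAC (z i) (phi i j) N).
by rewrite zN exp1rz.
Qed.

Lemma chi_torus_map phi z m : torsion z -> chi (m *m phi^T) z = chi m (torus_map phi z).
Proof.
move=> z_tors; rewrite /chi /torus_map.
under eq_bigr => i _ do rewrite mxE (expfz_sum _ _ (torsion_neq0 i z_tors)).
rewrite exchange_big /=; apply: eq_bigr => j _; rewrite -prodfXz.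
by apply: eq_bigr => i _; rewrite mxE exprz_exp mulrC.
Qed.

(* N-torsion points are coded by exponents of a primitive N-th root of unity. *)
Lemma ntorsion_finite N : (0 < N)%N ->
  exists code : ('I_n -> algC) -> {ffun 'I_n -> option 'I_N},
    forall y z, ntorsion N y -> ntorsion N z -> code y = code z -> y = z.
Proof.
move=> N_gt0; have [ze ze_prim] := C_prim_root_exists N_gt0.
pose code z := [ffun i => [pick e : 'I_N | z i == ze ^+ e]].
have codeP z i : ntorsion N z -> exists e : 'I_N, code z i = Some e /\ z i = ze ^+ e.
  move=> zN; rewrite ffunE; case: pickP => [e /eqP | no_e]; first by exists e.
  by have [e ze_e] := prim_rootP ze_prim (zN i); have := no_e e; rewrite ze_e eqxx.
exists code => y z yN zN eq_code; apply: functional_extensionality => i.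
have [e [code_y ->]] := codeP y i yN; have [e' [code_z ->]] := codeP z i zN.
by move: code_y; rewrite eq_code code_z => -[->].
Qed.

End Torus.

Section Toric.
Variable n : nat.
Implicit Types (m g : 'rV[int]_n) (s t : cone n).

Lemma pairZ_mx m g : pairZ m g = (m *m g^T) 0 0.
Proof. by rewrite !mxE; apply: eq_bigr => i _; rewrite !mxE. Qed.

Lemma pairQ_mx (m u : 'rV[rat]_n) : pairQ m u = (m *m u^T) 0 0.
Proof. by rewrite !mxE; apply: eq_bigr => i _; rewrite !mxE. Qed.

Lemma pairQ_toQ_phi m g (phi : 'M[int]_n) :
  pairQ (toQ m) (toQ g *m phiQ phi) = (pairZ (m *m phi^T) g)%:~R.
Proof. by rewrite pairQ_mx pairZ_mx /toQ /phiQ trmx_mul mulmxA !map_trmx -!map_mxM mxE. Qed.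

Lemma pairQ_toQ m g : pairQ (toQ m) (toQ g) = (pairZ m g)%:~R.
Proof. by rewrite pairQ_mx pairZ_mx /toQ map_trmx -map_mxM mxE. Qed.

Lemma pairZ0 g : pairZ 0 g = 0.
Proof. by rewrite /pairZ big1 // => i _; rewrite mxE mul0r. Qed.

Lemma pairZD m m' g : pairZ (m + m') g = pairZ m g + pairZ m' g.
Proof. by rewrite /pairZ -big_split; apply: eq_bigr => i _; rewrite mxE mulrDl. Qed.

Lemma in_perp0 s : in_perp s 0.
Proof. by apply/allP => g _; rewrite pairZ0. Qed.

Lemma in_perpD s m m' : in_perp s m -> in_perp s m' -> in_perp s (m + m').
Proof.
move=> /allP perp_m /allP perp_m'; apply/allP => g g_in.
by rewrite pairZD (eqP (perp_m g g_in)) (eqP (perp_m' g g_in)) addr0.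
Qed.

Lemma in_cone_mem s g : g \in s -> in_cone s (toQ g).
Proof.
move=> g_in; have idx_lt : (index g s < size s)%N by rewrite index_mem.
exists (fun i => ((i : nat) == index g s)%:R); split; first by move=> i; case: eqP.
rewrite (bigD1 (Ordinal idx_lt)) //= eqxx scale1r nth_index // big1 ?addr0 // => i.
by rewrite -val_eqE /= => /negbTE ->; rewrite scale0r.
Qed.

Lemma in_perp_cone t m u : in_perp t m -> in_cone t u -> pairQ (toQ m) u = 0.
Proof.
move=> /allP perp_m [l [_ ->]].
rewrite pairQ_mx linear_sum mulmx_sumr summxE big1 // => i _.
rewrite linearZ -scalemxAr mxE -pairQ_mx pairQ_toQ.
by rewrite (eqP (perp_m _ (mem_nth 0 (ltn_ord i)))) mulr0.
Qed.

Lemma in_perp_pullback s t (phi : 'M[int]_n) m :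
  (forall u, in_cone s u -> in_cone t (u *m phiQ phi)) ->
  in_perp t m -> in_perp s (m *m phi^T).
Proof.
move=> phi_st perp_m; apply/allP => g g_in.
have := in_perp_cone perp_m (phi_st _ (in_cone_mem g_in)).
by rewrite pairQ_toQ_phi => /eqP; rewrite intr_eq0.
Qed.

Lemma is_face_refl s : is_face s s.
Proof.
exists 0; split; first by apply/allP => g _; rewrite pairZ0.
move=> u; rewrite /pairQ big1 ?eqxx => [|i _]; last by rewrite !mxE mul0r.
by split=> [|[]].
Qed.

Variables (k : nat) (F : 'I_k -> cone n).

Definition orbit_point (j : 'I_k) (z : 'I_n -> algC) : tpoint n k :=
  (j, fun m => if in_perp (F j) m then chi m z else 0).

Lemma orbit_point_is_point j z : torsion z -> is_point F (orbit_point j z).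
Proof.
move=> z_tors; split => /=.
- by rewrite in_perp0 chi0.
- by move=> m; case: ifP => _; rewrite ?chi_neq0 ?eqxx.
- by move=> m m' perp_m perp_m'; rewrite in_perpD // perp_m perp_m' chiD.
Qed.

Lemma toric_morphism_orbit_point phi f j z :
  is_toric_morphism F phi f -> torsion z ->
  f (orbit_point j z) = orbit_point (f (orbit_point j z)).1 (torus_map phi z).
Proof.
move=> [_ fM] z_tors; have [phi_cone _ f_coord] := fM _ (orbit_point_is_point j z_tors).
rewrite [LHS]surjective_pairing; congr pair.
apply: functional_extensionality => m; rewrite f_coord /=.
by case: ifP => // perp_m; rewrite (in_perp_pullback phi_cone perp_m) chi_torus_map.
Qed.

Lemma orbit_point_preperiodic phi f j z :
  is_toric_morphism F phi f -> torsion z -> preperiodic f (orbit_point j z).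
Proof.
move=> fM [N N_gt0 zN]; have [code code_inj] := ntorsion_finite n N_gt0.
pose zs a := iter a (torus_map phi) z.
have zsN a : ntorsion N (zs a) by elim: a => [|a IHa] //=; exact: ntorsion_torus_map.
have iter_f a : iter a f (orbit_point j z) = orbit_point (iter a f (orbit_point j z)).1 (zs a).
  elim: a => [|a IHa] //=; rewrite [in LHS]IHa (toric_morphism_orbit_point _ fM).
    by rewrite -IHa.
  by exists N.
pose c a := ((iter a f (orbit_point j z)).1, code (zs a)).
apply: (iter_repeat_of_finite_code (c := c)) => a b [eq_cone eq_code].
by rewrite iter_f [RHS]iter_f eq_cone (code_inj _ _ (zsN a) (zsN b)).
Qed.

Lemma point_coord_perp p m : is_point F p -> ~~ in_perp (F p.1) m -> p.2 m = 0.
Proof. by case=> _ p_supp _; rewrite -p_supp negbK => /eqP. Qed.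

End Toric.

Theorem mainTheorem5 (n k : nat) (F : 'I_k -> cone n) (phi : 'M[int]_n)
    (f : tpoint n k -> tpoint n k) :
  is_fan F -> Qfactorial_fan F -> projective_fan F ->
  is_toric_morphism F phi f -> surjective_on F f ->
  zdense F (fun p => is_point F p /\ preperiodic f p).
Proof.
move=> _ _ _ fM _ Z Z_closed Z_pre p p_pt.
have [G [_ Z_G]] := Z_closed p.1.
apply/(Z_G p p_pt (is_face_refl _)) => g g_in.
set S := undup (unzip2 g).
pose a m := if in_perp (F p.1) m then laurent_coef g m else 0.
have a0 : forall m, m \in S -> a m = 0.
  apply: chi_independent (undup_uniq _) _ => z z_tors.
  have q_pt := orbit_point_is_point F p.1 z_tors.
  have q_pre := orbit_point_preperiodic p.1 fM z_tors.
  have := (Z_G _ q_pt (is_face_refl _)).1 (Z_pre _ q_pt (conj q_pt q_pre)) g g_in.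
  rewrite /eval_l sum_laurent_coef -/S => sum0; rewrite -[RHS]sum0.
  by apply: eq_bigr => m _ /=; rewrite /a; case: ifP; rewrite ?mulr0 ?mul0r.
rewrite /eval_l sum_laurent_coef -/S big_seq big1 // => m /a0; rewrite /a.
case: ifP => [_ -> | perp_m _]; first by rewrite mul0r.
by rewrite (point_coord_perp p_pt) ?perp_m // mulr0.
Qed.
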